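(* For every $\rho\in(0,1]$ there is a constant $C(\rho)$ such that every finite group $G$ with $\mathrm{cp}(G)\geq\rho$ satisfies $[G:\mathrm{Rad}(G)]\leq C(\rho)$. Equivalently, for finite groups $G$, $\mathrm{cp}(G)\to 0$ as $[G:\mathrm{Rad}(G)]\to\infty$.
   Context: $\mathrm{cp}(G)$ denotes the commuting probability of a finite group $G$, i.e. $|\{(x,y)\in G^2: xy=yx\}|/|G|^2$. $\mathrm{Rad}(G)$ is the solvable radical of $G$ (largest normal solvable subgroup). *)

From HB Require Import structures.
From mathcomp Require Import all_boot all_order all_algebra all_fingroup all_solvable.
Set Implicit Arguments. Unset Strict Implicit. Unset Printing Implicit Defensive.
Import GRing.Theory Num.Theory.

Definition cp (gT : finGroupType) (G : {group gT}) : rat :=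
  (#|[set xy in setX G G | (xy.1 * xy.2 == xy.2 * xy.1)%g]|%:R / (#|G| ^ 2)%:R)%R.

(* Solvable radical: the subgroup generated by all normal solvable subgroups
   of G (this is the largest normal solvable subgroup). *)
Definition Rad (gT : finGroupType) (G : {group gT}) : {set gT} :=
  << \bigcup_(H : {group gT} | (H <| G) && solvable H) H >>%g.

From HB Require Import structures.
From mathcomp Require Import all_boot all_order all_algebra all_fingroup all_solvable.
From mathcomp Require Import zify.
(* If cp(G) >= 1/q then |G|^2 <= q * sum_(x in G) |C_G(x)|, so the set B of
   elements of G whose class has at most m = 2q elements fills at least a
   1/m-th of G.  Since 1 \in B = B^-1, the powers of B grow by |B| every three
   steps until they stabilise, so D = <B> = B^(3m+1) is a normal subgroup of
   index at most m all of whose G-classes have at most M = m^(3m+1) elements.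
   In D pick a with |a^D| maximal and a set T of at most M conjugators of a
   onto a^D: for c centralising T, (a^D)c is contained in, hence equal to,
   (ac)^D, so if c also centralises a^D then [c, D] lies in <a^D>.  The
   centraliser in D of the G-classes of a and T is therefore a metabelian
   normal subgroup of G of index at most M^((M+1)M) in D, and it lies in
   Rad G. *)

Set Implicit Arguments. Unset Strict Implicit. Unset Printing Implicit Defensive.
Import Order.TTheory GRing.Theory Num.Theory.

Section IndexAndClasses.
Variable gT : finGroupType.
Implicit Types (G H K D : {group gT}) (A S : {set gT}).
Local Open Scope group_scope.

Lemma leq_index_subg G H K : H \subset G -> K \subset G -> #|H : K| <= #|G : K|.
Proof.
move=> sHG sKG; have cardHK : (#|H : H :&: K| * #|K|)%N = #|H * K|.
  apply/eqP; rewrite -(eqn_pmul2l (cardG_gt0 (H :&: K)%G)) mulnA Lagrange ?subsetIl //.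
  by rewrite mul_cardG mulnC.
rewrite -indexgI -(leq_pmul2r (cardG_gt0 K)) cardHK [X in _ <= X]mulnC Lagrange //.
by rewrite subset_leq_card ?mul_subG.
Qed.

Lemma leq_index_setI G H K :
  H \subset G -> K \subset G -> #|G : H :&: K| <= #|G : H| * #|G : K|.
Proof.
move=> sHG sKG; rewrite -(Lagrange_index sHG (subsetIl H K)) leq_mul2l indexgI.
by rewrite leq_index_subg ?orbT.
Qed.

Lemma leq_index_card G H m : H \subset G -> #|G| <= m * #|H| -> #|G : H| <= m.
Proof. by move=> sHG; rewrite -(Lagrange sHG) mulnC leq_pmul2r. Qed.

Lemma leq_card_classM G x y : #|(x * y) ^: G| <= #|x ^: G| * #|y ^: G|.
Proof.
rewrite -!index_cent1.
apply: leq_trans (leq_index_setI (subsetIl G 'C[x]) (subsetIl G 'C[y])).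
rewrite dvdn_leq ?indexg_gt0 // indexgS //; apply/subsetP=> z.
rewrite !in_setI => /andP[/andP[zG /cent1P cxz] /andP[_ /cent1P cyz]].
by rewrite zG; apply/cent1P; apply: commuteM.
Qed.

Lemma leq_index_cent D M S :
  {in S, forall y, #|D : 'C_D[y]| <= M} -> #|D : 'C_D(S)| <= M ^ #|S|.
Proof.
move: {2}#|S| (erefl #|S|) => n; elim: n S => [|n IHn] S cardS hS.
  move/eqP: cardS; rewrite cards_eq0 => /eqP->.
  by rewrite cards0 (setIidPl _) ?indexgg // centsC sub0set.
have [x xS] : exists x, x \in S by apply/card_gt0P; rewrite cardS.
rewrite -(setD1K xS) centU cent_set1 cardsU1 !inE eqxx /=.
have -> : D :&: ('C[x] :&: 'C(S :\ x)) = 'C_D[x] :&: 'C_D(S :\ x).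
  by rewrite setIACA setIid.
apply: leq_trans (leq_index_setI (subsetIl D _) (subsetIl D _)) _.
rewrite add1n expnS leq_mul ?hS //; apply: IHn => [|y /setD1P[_ yS]]; last exact: hS.
by apply: succn_inj; rewrite -cardS (cardsD1 x S) xS.
Qed.

Lemma leq_card_class_support G M A :
  {in A, forall x, #|x ^: G| <= M} -> #|class_support A G| <= #|A| * M.
Proof.
move=> hA; rewrite class_supportEl -sum_nat_const.
elim/big_rec2: _ => [|x n U xA leUn]; first by rewrite cards0.
by rewrite (leq_trans (leq_card_setU _ _).1) // leq_add ?hA.
Qed.

Lemma leq_card_class_expgs G A m j x :
  {in A, forall a, #|a ^: G| <= m} -> x \in A ^+ j -> #|x ^: G| <= m ^ j.
Proof.
move=> classA; elim: j x => [|j IHj] x.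
  by rewrite expg0 inE => /eqP->; rewrite class1G cards1.
rewrite expgS => /mulsgP[a y aA yAj ->].
by rewrite (leq_trans (leq_card_classM G a y)) // expnS leq_mul ?classA ?IHj.
Qed.

Lemma small_class_conjugators D a :
  exists T : {set gT}, [/\ T \subset D, #|T| <= #|a ^: D| & a ^: D \subset a ^: T].
Proof.
pose conjugator y := odflt 1 [pick t in D | a ^ t == y].
have conjugatorP y : y \in a ^: D -> conjugator y \in D /\ a ^ conjugator y = y.
  case/imsetP=> t tD ->; rewrite /conjugator; case: pickP => [u /andP[uD /eqP] //|].
  by move/(_ t); rewrite tD eqxx.
exists (conjugator @: (a ^: D)); split; last 2 [exact: leq_imset_card].
  by apply/subsetP=> _ /imsetP[y /conjugatorP[] ? _ ->].
apply/subsetP=> y aDy; have [_ <-] := conjugatorP y aDy.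
by rewrite memJ_class ?imset_f.
Qed.

End IndexAndClasses.

Section CommutingPairs.
Variable gT : finGroupType.
Implicit Type G : {group gT}.
Local Open Scope group_scope.

Lemma card_commuting_pairs G :
  #|[set xy in setX G G | xy.1 * xy.2 == xy.2 * xy.1]| = \sum_(x in G) #|'C_G[x]|.
Proof.
under eq_bigr do rewrite -sum1_card.
rewrite pair_big_dep /= -sum1_card; apply: eq_bigl => -[x y] /=.
rewrite inE in_setX in_setI; case: (x \in G) (y \in G) => [] [] //=.
by apply/eqP/cent1P.
Qed.

Definition small_classes G m := [set x in G | #|x ^: G| <= m].

Lemma small_classes_norm G m : G \subset 'N(small_classes G m).
Proof.
apply/subsetP=> g gG; rewrite inE; apply/subsetP=> x.
by rewrite mem_conjg !inE groupJr ?groupV // classGidl ?groupV.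
Qed.

Lemma sum_card_cent1_small_classes G m :
  m * \sum_(x in G) #|'C_G[x]| <= m * #|small_classes G m| * #|G| + #|G| ^ 2.
Proof.
rewrite (bigID (fun x => #|x ^: G| <= m)) /= mulnDr leq_add //.
  rewrite -mulnA leq_mul2l -sum_nat_const; apply/orP; right.
  rewrite (eq_bigl (fun x => (x \in G) && (#|x ^: G| <= m))) => [|x]; last by rewrite inE.
  by apply: leq_sum => x _; apply: subset_leq_card; apply: subsetIl.
rewrite big_distrr /= big_mkcondr expnS expn1 -sum_nat_const leq_sum // => x xG.
case: ifP => //; rewrite -ltnNge => ltm.
rewrite -(Lagrange (subsetIl G 'C[x])) index_cent1 mulnC.
exact: leq_mul (leqnn _) (ltnW ltm).
Qed.

End CommutingPairs.

Section SetPowers.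
Variables (gT : finGroupType) (B : {set gT}).
Local Open Scope group_scope.

Lemma expgs_sub_gen j : B ^+ j \subset <<B>>.
Proof.
elim: j => [|j IHj]; first exact: sub1G.
by rewrite expgS mul_subG ?subset_gen.
Qed.

Hypotheses (B1 : 1 \in B) (BV : {in B, forall x, x^-1 \in B}).

Lemma expgs_subS j : B ^+ j \subset B ^+ j.+1.
Proof. by rewrite expgSr -{1}(mulg1 (B ^+ j)) mulgS // sub1set. Qed.

Lemma expgs_sub_leq i k : i <= k -> B ^+ i \subset B ^+ k.
Proof.
move/subnK <-; elim: (k - i) => [|n IHn] //=.
exact: subset_trans IHn (expgs_subS _).
Qed.

Lemma card_expgs_grow j x : x \in B ^+ j.+2 -> x \notin B ^+ j.+1 ->
  #|B ^+ j| + #|B| <= #|B ^+ j.+3|.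
Proof.
move=> xBj2 xNBj1.
have disjBjxB : [disjoint B ^+ j & x *: B].
  apply/pred0P=> y /=; apply/andP=> -[yBj /lcosetP[b bB def_y]].
  case/negP: xNBj1; rewrite expgSr (_ : x = y * b^-1) ?mem_mulg ?BV //.
  by rewrite def_y mulgK.
rewrite -(card_lcoset B x) -cardsUI (disjoint_setI0 disjBjxB) cards0 addn0.
rewrite subset_leq_card // subUset expgs_sub_leq /=; last by lia.
apply/subsetP=> _ /lcosetP[b bB ->].
by rewrite (expgSr _ j.+2) mem_mulg.
Qed.

Lemma gen_sub_expgs_fix j : B ^+ j.+1 = B ^+ j -> <<B>> \subset B ^+ j.
Proof.
move=> fixj; have fix_from_j k : B ^+ (j + k) = B ^+ j.
  by elim: k => [|k IHk]; rewrite ?addn0 // addnS expgSr IHk -expgSr.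
have [n ->] := gen_expgs B; rewrite (setUidPr _) ?sub1set //.
by rewrite -(fix_from_j n) expgs_sub_leq ?leq_addl.
Qed.

Lemma leq_card_expgs_chain k :
  (forall i, i < k -> B ^+ (3 * i).+2 != B ^+ (3 * i).+1) ->
  k * #|B| <= #|B ^+ (3 * k)|.
Proof.
elim: k => [|k IHk] hne; first by rewrite mul0n.
have : B ^+ (3 * k).+1 \proper B ^+ (3 * k).+2.
  by rewrite properEneq eq_sym hne ?expgs_subS.
case/properP=> _ [x xBk2 xNBk1].
rewrite mulSn addnC mulnS add3n.
apply: leq_trans (card_expgs_grow xBk2 xNBk1); rewrite leq_add2r IHk // => i ltik.
exact/hne/ltnW.
Qed.

Lemma gen_sub_expgs N : #|<<B>>| <= N * #|B| -> <<B>> \subset B ^+ (3 * N).+1.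
Proof.
move=> small_gen.
have [[i /eqP fixi]|] := altP (@existsP _ (fun i : 'I_N.+1 => B ^+ (3 * i).+2 == B ^+ (3 * i).+1)).
  rewrite (subset_trans (gen_sub_expgs_fix fixi)) // expgs_sub_leq //.
  by rewrite ltnS leq_mul2l -ltnS ltn_ord.
rewrite negb_exists => /forallP hne; exfalso.
have := @leq_card_expgs_chain N.+1 (fun i ltiN => hne (Ordinal ltiN)).
have := subset_leq_card (expgs_sub_gen (3 * N.+1)).
have : 0 < #|B| by apply/card_gt0P; exists 1.
lia.
Qed.

End SetPowers.

Section MaxClass.
Variables (gT : finGroupType) (D : {group gT}) (a : gT) (T : {set gT}).
Local Open Scope group_scope.
Hypotheses (aD : a \in D) (a_max : {in D, forall x, #|x ^: D| <= #|a ^: D|}).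
Hypotheses (sTD : T \subset D) (aDT : a ^: D \subset a ^: T).

Lemma class_mulg_cent c : c \in D -> c \in 'C(T) ->
  [set y * c | y in a ^: D] = (a * c) ^: D.
Proof.
move=> cD cTc; apply/eqP; rewrite eqEcard (card_imset _ (mulIg c)) a_max ?groupM // andbT.
apply/subsetP=> _ /imsetP[_ /(subsetP aDT)/imsetP[t tT ->] ->].
have ct : commute c t := centP cTc t tT.
have -> : a ^ t * c = (a * c) ^ t by rewrite conjMg (conjgE c) ct mulKg.
by rewrite memJ_class ?(subsetP sTD).
Qed.

Lemma commg_mem_gen_class c g : c \in D -> c \in 'C(T :|: a ^: D) -> g \in D ->
  [~ c, g] \in <<a ^: D>>.
Proof.
rewrite centU => cD /setIP[cTc caDc] gD.
have : (a * c) ^ g \in [set y * c | y in a ^: D] by rewrite class_mulg_cent ?memJ_class.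
case/imsetP=> y yaD def_acg.
have agaD : a ^ g \in a ^: D by rewrite memJ_class.
have cw : commute c ((a ^ g)^-1 * y).
  exact: commuteM (commuteV (centP caDc _ agaD)) (centP caDc _ yaD).
have def_cg : c ^ g = (a ^ g)^-1 * y * c by rewrite -mulgA -def_acg conjMg mulKg.
have ->: [~ c, g] = (a ^ g)^-1 * y by rewrite commgEl def_cg -cw mulKg.
by rewrite groupM ?groupV ?mem_gen.
Qed.

Lemma cent_max_class_solvable (C : {group gT}) :
  C \subset D -> C \subset 'C(T :|: a ^: D) -> solvable C.
Proof.
move=> sCD cTaC; have sC'aD : C^`(1) \subset <<a ^: D>>.
  rewrite gen_subG; apply/subsetP=> _ /imset2P[c g cC gC ->].
  by rewrite commg_mem_gen_class ?(subsetP sCD) ?(subsetP cTaC).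
have caD_C : <<a ^: D>> \subset 'C(C).
  by rewrite centsC cent_gen (subset_trans cTaC) ?centS ?subsetUr.
apply/derivedP; exists 2; rewrite dergSn derg1; apply/commG1P.
by rewrite (subset_trans sC'aD) // (subset_trans caD_C) ?centS ?der1_subG.
Qed.

End MaxClass.

Section SolvableCore.
Variable gT : finGroupType.
Implicit Types G D E : {group gT}.
Local Open Scope group_scope.

Lemma bounded_classes_solvable_normal G D M :
  D \subset G -> G \subset 'N(D) -> {in D, forall y, #|y ^: G| <= M} ->
  exists E, [/\ E <| G, solvable E, E \subset D & #|D : E| <= M ^ (M.+1 * M)].
Proof.
move=> sDG nDG classM.
have M_gt0 : 0 < M by rewrite (leq_trans _ (classM 1 (group1 D))) // class1G cards1.
have classDM y : y \in D -> #|y ^: D| <= M.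
  by move=> yD; rewrite (leq_trans _ (classM y yD)) // subset_leq_card ?classS.
case: (@arg_maxnP _ 1 [in D] (fun x => #|x ^: D|) (group1 D)) => a aD a_max.
have [T [sTD leTaD aDT]] := small_class_conjugators D a.
pose S := class_support (a |: T) G.
have sSD : S \subset D by rewrite class_support_sub_norm // subUset sub1set aD.
have sTaD_S : T :|: a ^: D \subset S.
  rewrite subUset (subset_trans (subsetUr [set a] T)) ?sub_class_support //=.
  by apply/subsetP=> _ /imsetP[d dD ->]; rewrite memJ_class_support ?setU11 ?(subsetP sDG).
exists 'C_D(S)%G; split; rewrite ?subsetIl //.
- by rewrite /normal subIset ?sDG //= normsI ?norms_cent ?class_support_norm.
- by apply: (cent_max_class_solvable aD a_max sTD aDT); rewrite ?subsetIl // subIset // (centS sTaD_S) orbT.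
have classSD : {in S, forall y, #|D : 'C_D[y]| <= M}.
  by move=> y /(subsetP sSD) yD; rewrite index_cent1 classDM.
have classaTG : {in a |: T, forall y, #|y ^: G| <= M}.
  by move=> y /setU1P[-> | /(subsetP sTD)]; apply: classM.
have cardS : #|S| <= M.+1 * M.
  rewrite (leq_trans (leq_card_class_support classaTG)) // leq_mul2r cardsU1 -add1n.
  by rewrite leq_add ?leq_b1 ?(leq_trans leTaD) ?classDM ?orbT.
by rewrite (leq_trans (leq_index_cent classSD)) ?leq_pexp2l.
Qed.

Lemma leq_index_Rad G E : E <| G -> solvable E -> #|G : Rad G| <= #|G : E|.
Proof.
move=> nEG solE; rewrite dvdn_leq ?indexg_gt0 // indexgS // sub_gen //.
by rewrite (bigcup_sup E) // nEG.
Qed.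

End SolvableCore.

Definition index_Rad_bound q :=
  let m := 2 * q in let M := m ^ (3 * m).+1 in m * M ^ (M.+1 * M).

Section RadicalIndex.
Variable gT : finGroupType.
Implicit Type G : {group gT}.
Local Open Scope group_scope.

Lemma cp_sum_card_cent1_bound (rho : rat) q G : (1 <= rho * q%:R)%R -> (rho <= cp G)%R ->
  #|G| ^ 2 <= q * \sum_(x in G) #|'C_G[x]|.
Proof.
rewrite /cp card_commuting_pairs => rho_q rho_cp.
have G2_gt0 : (0 < (#|G| ^ 2)%:R :> rat)%R by rewrite ltr0n expn_gt0 cardG_gt0.
rewrite ler_pdivlMr // in rho_cp; rewrite -(ler_nat rat) natrM.
apply: le_trans (_ : rho * q%:R * (#|G| ^ 2)%:R <= _)%R; first by rewrite ler_peMl.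
by rewrite [(rho * _)%R]mulrC -mulrA ler_wpM2l.
Qed.

Lemma small_classes_dense G q :
  #|G| ^ 2 <= q * \sum_(x in G) #|'C_G[x]| -> #|G| <= 2 * q * #|small_classes G (2 * q)|.
Proof.
have := sum_card_cent1_small_classes G (2 * q); have := cardG_gt0 G; nia.
Qed.

Lemma leq_index_Rad_bound G q : 0 < q ->
  #|G| ^ 2 <= q * \sum_(x in G) #|'C_G[x]| -> #|G : Rad G| <= index_Rad_bound q.
Proof.
rewrite /index_Rad_bound => q_gt0 /small_classes_dense.
set m := (2 * q)%N; set B := small_classes G m => leGB.
have B1 : 1 \in B by rewrite inE group1 class1G cards1 muln_gt0.
have BV : {in B, forall x, x^-1 \in B} by move=> x; rewrite !inE groupV classVg card_invg.
have sBG : B \subset G by apply/subsetP=> x /setIdP[].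
have sDG : <<B>> \subset G by rewrite gen_subG.
have sDBs : <<B>> \subset B ^+ (3 * m).+1.
  by apply: gen_sub_expgs => //; rewrite (leq_trans (subset_leq_card sDG)).
have classD : {in <<B>>, forall y, #|y ^: G| <= m ^ (3 * m).+1}.
  by move=> y /(subsetP sDBs); apply: leq_card_class_expgs => x /setIdP[].
have nDG : G \subset 'N(<<B>>) by rewrite norms_gen ?small_classes_norm.
have [E [nEG solE sED leDE]] := bounded_classes_solvable_normal sDG nDG classD.
rewrite (leq_trans (leq_index_Rad nEG solE)) // -(Lagrange_index sDG sED) leq_mul //.
by rewrite leq_index_card // (leq_trans leGB) // leq_mul2l subset_leq_card ?subset_gen ?orbT.
Qed.

End RadicalIndex.

Theorem proposition6 :
  forall rho : rat, (0 < rho)%R -> (rho <= 1)%R ->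
  exists C : nat,
    forall (gT : finGroupType) (G : {group gT}),
      (rho <= cp G)%R -> (#|G : Rad G|)%g <= C.
Proof.
move=> rho rho_gt0 _; have [d den_rho] := denqP rho.
have rho_den : (1 <= rho * d.+1%:R)%R.
  by have := numqE rho; rewrite den_rho => <-; rewrite ler1z -gtz0_ge1 numq_gt0.
exists (index_Rad_bound d.+1) => gT G rho_cp.
exact: leq_index_Rad_bound (ltn0Sn d) (cp_sum_card_cent1_bound rho_den rho_cp).
Qed.
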